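(* Let $b>a\ge0$, $\beta\in(0,1)$, and let $0w1$ be a valid word. Then the function $x\mapsto\lambda(0w1,x)$ is differentiable on $\mathbb{R}_+$ and $$\Big|\frac{d}{dx}\lambda(0w1,x)\Big|\le\frac{1}{(1-\beta)^2}\qquad\text{for all }x\ge0 .$$
   Context: Words are strings over $\{0,1\}$, $w_{1:n}=w_1\cdots w_n$ (with $w_{1:0}$ the empty word), $w^\omega$ the infinite repetition, $|w|$ the length. $\phi_0(x)=\frac{x+1}{ax+a+1}$, $\phi_1(x)=\frac{x+1}{bx+b+1}$ on $\mathbb{R}_+=[0,\infty)$, $\phi_w=\phi_{w_{|w|}}\circ\cdots\circ\phi_{w_1}$ (first letter applied first), $\phi_{\text{empty}}=\mathrm{id}$. For a possibly infinite word $u$, $S(u,x):=\sum_{n=0}^{|u|-1}\beta^n\phi_{u_{1:n}}(x)$, and $$\lambda(0w1,x):=\frac{1-\beta^{|0w1|}}{1-\beta}\Big(S\big((01w)^\omega,x\big)-S\big((10w)^\omega,x\big)\Big).$$ For $p\ge1$, $L_p,R_p$ are the word morphisms determined by $L_p(0)=0^{p+1}1$, $L_p(1)=0^p1$, $R_p(0)=01^p$, $R_p(1)=01^{p+1}$; the valid words form the smallest set of words containing $0,1$ and closed under all $L_p,R_p$. *)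

From Stdlib Require Import Reals Lra List Classical ClassicalEpsilon.
Import ListNotations.
Open Scope R_scope.

(* Letters: 0 = false, 1 = true.  Words = list bool. *)

Definition phi (a b : R) (c : bool) (x : R) : R :=
  if c then (x + 1) / (b * x + b + 1) else (x + 1) / (a * x + a + 1).

(* phi_w = phi_{w_|w|} o ... o phi_{w_1}: first letter applied first. *)
Definition phi_word (a b : R) (w : list bool) (x : R) : R :=
  fold_left (fun y c => phi a b c y) w x.

(* Infinite words are functions nat -> bool (u_1 is u 0). *)
Definition prefix (u : nat -> bool) (n : nat) : list bool := map u (seq 0 n).

(* u^omega for a nonempty finite word u *)
Definition omega (v : list bool) : nat -> bool :=
  fun n => nth (n mod length v) v false.

(* Limit of a real sequence (chosen by classical choice; meaningful when it exists). *)
Definition Rlim (s : nat -> R) : R :=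
  epsilon (inhabits 0) (fun l => Un_cv s l).

Definition S_inf (a b beta : R) (u : nat -> bool) (x : R) : R :=
  Rlim (fun N => sum_f_R0 (fun n => beta ^ n * phi_word a b (prefix u n) x) N).

(* lambda(0w1,x) *)
Definition lambda (a b beta : R) (w : list bool) (x : R) : R :=
  (1 - beta ^ (length w + 2)) / (1 - beta) *
  (S_inf a b beta (omega ([false; true] ++ w)) x
   - S_inf a b beta (omega ([true; false] ++ w)) x).

Definition Lsub (p : nat) (c : bool) : list bool :=
  if c then repeat false p ++ [true] else repeat false (S p) ++ [true].
Definition Rsub (p : nat) (c : bool) : list bool :=
  if c then false :: repeat true (S p) else false :: repeat true p.
Definition Lmorph (p : nat) (w : list bool) : list bool := flat_map (Lsub p) w.
Definition Rmorph (p : nat) (w : list bool) : list bool := flat_map (Rsub p) w.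

Inductive valid : list bool -> Prop :=
| valid0 : valid [false]
| valid1 : valid [true]
| validL : forall p w, (1 <= p)%nat -> valid w -> valid (Lmorph p w)
| validR : forall p w, (1 <= p)%nat -> valid w -> valid (Rmorph p w).

(** The maps [phi_0], [phi_1] are Möbius maps [y |-> (y+1)/(k y + k + 1)] with
    [k >= 0]; on [R+] they are nondecreasing, [1]-Lipschitz, grow by at most [1],
    and have derivative [1/(k y + k + 1)^2] in [(0,1]].  Hence every [phi_w]
    grows at most linearly, its difference quotients and its derivative lie in
    [[0,1]], so [S(u,.)] is a convergent series whose difference quotients are
    dominated termwise by [beta^n]; passing to the limit under the sum gives
    [S'(u,x) = sum_n beta^n phi_(u_(1:n))'(x)], a number in [[0, 1/(1-beta)]].
    Thus [|lambda'| <= (1-beta^|0w1|)/(1-beta) * 1/(1-beta) <= 1/(1-beta)^2]. *)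

From Stdlib Require Import Reals List Lra Lia ClassicalEpsilon.
From Coquelicot Require Import Coquelicot.
Import ListNotations.
Open Scope R_scope.

Definition mobius (k y : R) : R := (y + 1) / (k * y + k + 1).

Definition letter_coef (a b : R) (c : bool) : R := if c then b else a.

Lemma phi_mobius a b c : phi a b c = mobius (letter_coef a b c).
Proof. now destruct c. Qed.

Section Mobius.
Variable k : R.
Hypothesis k_ge0 : 0 <= k.

Lemma mobius_nonneg y : 0 <= y -> 0 <= mobius k y.
Proof. intros. unfold mobius. apply Rdiv_le_0_compat; nra. Qed.

Lemma mobius_le_succ y : 0 <= y -> mobius k y <= y + 1.
Proof. intros. unfold mobius. apply Rle_div_l; nra. Qed.

Lemma mobius_incr_lipschitz x y : 0 <= x <= y ->
  0 <= mobius k y - mobius k x <= y - x.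
Proof.
  intros [Hx Hxy]. unfold mobius.
  assert (1 <= k * x + k + 1) by nra. assert (1 <= k * y + k + 1) by nra.
  replace ((y + 1) / (k * y + k + 1) - (x + 1) / (k * x + k + 1))
    with ((y - x) / ((k * y + k + 1) * (k * x + k + 1))) by (field; lra).
  assert (1 <= (k * y + k + 1) * (k * x + k + 1)) by nra.
  split; [apply Rdiv_le_0_compat | apply Rle_div_l]; nra.
Qed.

Lemma mobius_derive y : 0 <= y ->
  derivable_pt_lim (mobius k) y (/ (k * y + k + 1) ^ 2).
Proof.
  intros Hy. apply is_derive_Reals. unfold mobius.
  auto_derive; [nra | field; nra].
Qed.

Lemma mobius_derive_bounds y : 0 <= y -> 0 <= / (k * y + k + 1) ^ 2 <= 1.
Proof.
  intros Hy. split.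
  - apply Rlt_le, Rinv_0_lt_compat. nra.
  - rewrite <- Rinv_1. apply Rinv_le_contravar; nra.
Qed.

End Mobius.

Section Words.
Variables a b : R.
Hypotheses (a_ge0 : 0 <= a) (b_ge0 : 0 <= b).

Let coef_ge0 c : 0 <= letter_coef a b c.
Proof. now destruct c. Qed.

Lemma phi_word_cons c w y : phi_word a b (c :: w) y = phi_word a b w (phi a b c y).
Proof. reflexivity. Qed.

Lemma phi_nonneg c y : 0 <= y -> 0 <= phi a b c y.
Proof. rewrite phi_mobius. now apply mobius_nonneg. Qed.

Lemma phi_word_nonneg w y : 0 <= y -> 0 <= phi_word a b w y.
Proof.
  revert y; induction w as [|c w IH]; intros y Hy; [exact Hy|].
  rewrite phi_word_cons. now apply IH, phi_nonneg.
Qed.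

Lemma phi_word_le w y : 0 <= y -> phi_word a b w y <= y + INR (length w).
Proof.
  revert y; induction w as [|c w IH]; intros y Hy; [simpl; lra|].
  rewrite phi_word_cons, length_cons, S_INR.
  pose proof (IH _ (phi_nonneg c y Hy)).
  pose proof (mobius_le_succ _ (coef_ge0 c) y Hy). rewrite <- phi_mobius in *.
  lra.
Qed.

Lemma phi_word_incr_lipschitz w x y : 0 <= x <= y ->
  0 <= phi_word a b w y - phi_word a b w x <= y - x.
Proof.
  revert x y; induction w as [|c w IH]; intros x y Hxy; [simpl; lra|].
  rewrite !phi_word_cons.
  pose proof (mobius_incr_lipschitz _ (coef_ge0 c) x y Hxy). rewrite <- phi_mobius in *.
  pose proof (phi_nonneg c x (proj1 Hxy)).
  pose proof (IH (phi a b c x) (phi a b c y) ltac:(lra)). lra.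
Qed.

Lemma phi_word_diff_quot_bounds w x y : 0 <= x -> 0 <= y -> y <> x ->
  0 <= (phi_word a b w y - phi_word a b w x) / (y - x) <= 1.
Proof.
  intros Hx Hy Hne. destruct (Rle_lt_dec x y) as [Hle|Hlt].
  - pose proof (phi_word_incr_lipschitz w x y (conj Hx Hle)).
    split; [apply Rdiv_le_0_compat | apply Rle_div_l]; lra.
  - pose proof (phi_word_incr_lipschitz w y x (conj Hy (Rlt_le _ _ Hlt))).
    replace ((phi_word a b w y - phi_word a b w x) / (y - x))
      with ((phi_word a b w x - phi_word a b w y) / (x - y)) by (field; lra).
    split; [apply Rdiv_le_0_compat | apply Rle_div_l]; lra.
Qed.

(* The chain rule for [phi_w = phi_(w') o phi_c], unfolded along the word. *)
Fixpoint phi_word_deriv (w : list bool) (y : R) : R :=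
  match w with
  | [] => 1
  | c :: w' => phi_word_deriv w' (phi a b c y) *
               / (letter_coef a b c * y + letter_coef a b c + 1) ^ 2
  end.

Lemma phi_word_derive w y : 0 <= y ->
  derivable_pt_lim (phi_word a b w) y (phi_word_deriv w y).
Proof.
  revert y; induction w as [|c w IH]; intros y Hy; cbn [phi_word_deriv].
  - apply derivable_pt_lim_id.
  - change (derivable_pt_lim (comp (phi_word a b w) (phi a b c)) y
      (phi_word_deriv w (phi a b c y) * / (letter_coef a b c * y + letter_coef a b c + 1) ^ 2)).
    apply derivable_pt_lim_comp.
    + rewrite phi_mobius. now apply mobius_derive.
    + now apply IH, phi_nonneg.
Qed.

Lemma phi_word_deriv_bounds w y : 0 <= y -> 0 <= phi_word_deriv w y <= 1.
Proof.
  revert y; induction w as [|c w IH]; intros y Hy; cbn [phi_word_deriv]; [lra|].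
  pose proof (IH _ (phi_nonneg c y Hy)).
  pose proof (mobius_derive_bounds _ (coef_ge0 c) y Hy).
  set (t := / _ ^ 2) in *. split; nra.
Qed.

End Words.

Lemma pow_unit_interval (r : R) (n : nat) : 0 <= r <= 1 -> 0 <= r ^ n <= 1.
Proof.
  intros Hr. split; [apply pow_le; lra | rewrite <- (pow1 n); apply pow_incr; lra].
Qed.

Lemma INR_mul_pow_le (r : R) (n : nat) : 0 <= r < 1 -> INR n * r ^ n <= / (1 - r).
Proof.
  intros Hr.
  assert (Bern : INR n * r ^ n * (1 - r) <= 1 - r ^ n).
  { induction n as [|n IH]; [simpl; lra|].
    rewrite S_INR, <- tech_pow_Rmult.
    pose proof (pow_unit_interval r n ltac:(lra)).
    assert (0 <= (1 - r) * (1 - r * r ^ n)) by (apply Rmult_le_pos; nra).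
    nra. }
  pose proof (pow_unit_interval r n ltac:(lra)).
  apply (Rmult_le_reg_r (1 - r)); [lra|]. rewrite Rinv_l; lra.
Qed.

Lemma ex_series_Rabs_le (u v : nat -> R) :
  (forall n, Rabs (u n) <= v n) -> ex_series v -> ex_series u.
Proof. intros; now apply (ex_series_le u v). Qed.

Section GeometricWeights.
Variable beta : R.
Hypothesis beta_01 : 0 < beta < 1.

Let ex_series_geom_scal (c q : R) : 0 <= q < 1 -> ex_series (fun n => c * q ^ n).
Proof.
  intros Hq. apply (ex_series_scal_l c (fun n => q ^ n)).
  apply ex_series_geom. rewrite Rabs_pos_eq; lra.
Qed.

(* Split [beta^n = sqrt(beta)^n * sqrt(beta)^n] and absorb [n] into one factor. *)
Lemma ex_series_pow_mul_linear_growth (y : R) (F : nat -> R) : 0 <= y ->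
  (forall n, 0 <= F n <= y + INR n) -> ex_series (fun n => beta ^ n * F n).
Proof.
  intros Hy HF. set (r := sqrt beta).
  assert (Hr : 0 <= r < 1).
  { split; [apply sqrt_pos|]. rewrite <- sqrt_1. apply sqrt_lt_1_alt. lra. }
  apply (ex_series_Rabs_le _ (fun n => y * beta ^ n + / (1 - r) * r ^ n)).
  - intros n. specialize (HF n).
    pose proof (pow_unit_interval beta n ltac:(lra)).
    pose proof (pow_unit_interval r n ltac:(lra)).
    pose proof (INR_mul_pow_le r n Hr).
    assert (Hsq : beta ^ n = r ^ n * r ^ n).
    { rewrite <- Rpow_mult_distr. unfold r. rewrite sqrt_sqrt; lra. }
    rewrite Rabs_pos_eq by nra.
    assert (INR n * beta ^ n <= / (1 - r) * r ^ n) by (rewrite Hsq; nra).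
    nra.
  - apply (ex_series_plus (fun n => y * beta ^ n) (fun n => / (1 - r) * r ^ n));
      apply ex_series_geom_scal; lra.
Qed.

Lemma ex_series_pow_mul_bounded (t : nat -> R) :
  (forall n, Rabs (t n) <= 1) -> ex_series (fun n => beta ^ n * t n).
Proof.
  intros Ht. apply (ex_series_Rabs_le _ (fun n => 1 * beta ^ n)).
  - intros n. rewrite Rabs_mult, Rabs_pos_eq by (apply pow_le; lra).
    pose proof (pow_unit_interval beta n ltac:(lra)). specialize (Ht n). nra.
  - apply ex_series_geom_scal. lra.
Qed.

Lemma Rabs_Series_pow_mul_le (t : nat -> R) :
  (forall n, Rabs (t n) <= 1) -> Rabs (Series (fun n => beta ^ n * t n)) <= / (1 - beta).
Proof.
  intros Ht.
  assert (Hle : forall n, 0 <= Rabs (beta ^ n * t n) <= beta ^ n).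
  { intros n. split; [apply Rabs_pos|].
    rewrite Rabs_mult, Rabs_pos_eq by (apply pow_le; lra).
    pose proof (pow_unit_interval beta n ltac:(lra)). specialize (Ht n). nra. }
  assert (Hgeom : ex_series (fun n => beta ^ n)) by (apply ex_series_geom; rewrite Rabs_pos_eq; lra).
  eapply Rle_trans.
  - apply Series_Rabs, (ex_series_Rabs_le _ (fun n => beta ^ n)); [|exact Hgeom].
    intros n. rewrite Rabs_Rabsolu. apply Hle.
  - rewrite <- Series_geom by (rewrite Rabs_pos_eq; lra).
    now apply Series_le.
Qed.

Lemma Rabs_Series_pow_mul_tail_le (t : nat -> R) (N : nat) :
  (forall n, Rabs (t n) <= 1) ->
  Rabs (Series (fun k => beta ^ (N + k) * t (N + k)%nat)) <= beta ^ N / (1 - beta).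
Proof.
  intros Ht.
  rewrite (Series_ext _ (fun k => beta ^ N * (beta ^ k * t (N + k)%nat)))
    by (intros k; rewrite pow_add; ring).
  rewrite Series_scal_l, Rabs_mult, Rabs_pos_eq by (apply pow_le; lra).
  apply Rmult_le_compat_l; [apply pow_le; lra|].
  apply Rabs_Series_pow_mul_le. intros k. apply Ht.
Qed.

End GeometricWeights.

Lemma Rlim_sum_f_R0 (s : nat -> R) : ex_series s ->
  Rlim (fun N => sum_f_R0 s N) = Series s.
Proof.
  intros Hs.
  assert (Hcv : Un_cv (fun N => sum_f_R0 s N) (Series s)).
  { apply is_series_Reals, Series_correct, Hs. }
  apply (UL_sequence (fun N => sum_f_R0 s N)); [|exact Hcv].
  apply (epsilon_spec (inhabits 0) (fun l => Un_cv (fun N => sum_f_R0 s N) l)).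
  now exists (Series s).
Qed.

Lemma limit1_in_ext (f g : R -> R) (D : R -> Prop) (l x : R) :
  (forall y, D y -> f y = g y) -> limit1_in g D l x -> limit1_in f D l x.
Proof.
  intros Efg Hg eps Heps. destruct (Hg eps Heps) as [alp [Halp Hclose]].
  exists alp. split; [exact Halp|]. intros y [Dy Hy]. rewrite Efg by exact Dy. now apply Hclose.
Qed.

Lemma limit1_in_diff_quot (f : R -> R) (D : R -> Prop) (x l : R) :
  derivable_pt_lim f x l ->
  limit1_in (fun y => (f y - f x) / (y - x)) (fun y => y <> x /\ D y) l x.
Proof.
  intros Hf eps Heps. destruct (Hf eps Heps) as [delta Hdelta].
  exists delta. split; [apply cond_pos|].
  intros y [[Hne _] Hy]. change R in y. simpl in Hy |- *. unfold R_dist in Hy |- *.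
  specialize (Hdelta (y - x) ltac:(lra) Hy).
  now replace (x + (y - x)) with y in Hdelta by ring.
Qed.

Lemma limit1_in_sum_f_R0 (g : nat -> R -> R) (e : nat -> R) (D : R -> Prop) (x : R) (N : nat) :
  (forall n, limit1_in (g n) D (e n) x) ->
  limit1_in (fun y => sum_f_R0 (fun n => g n y) N) D (sum_f_R0 e N) x.
Proof.
  intros Hg. induction N as [|N IH]; [apply Hg|].
  exact (limit_plus _ (g (S N)) D _ _ x IH (Hg (S N))).
Qed.

(* Tannery's theorem for the weights [beta^n]: the tails are uniformly small. *)
Lemma limit1_in_Series_pow_mul (beta : R) (g : nat -> R -> R) (e : nat -> R)
    (D : R -> Prop) (x : R) :
  0 < beta < 1 ->
  (forall n y, D y -> Rabs (g n y) <= 1) -> (forall n, Rabs (e n) <= 1) ->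
  (forall n, limit1_in (g n) D (e n) x) ->
  limit1_in (fun y => Series (fun n => beta ^ n * g n y)) D
            (Series (fun n => beta ^ n * e n)) x.
Proof.
  intros Hbeta Hg He Hlim eps Heps.
  destruct (pow_lt_1_zero beta ltac:(rewrite Rabs_pos_eq; lra) (eps * (1 - beta) / 4))
    as [N HN]; [nra|].
  specialize (HN (S N) ltac:(lia)). rewrite Rabs_pos_eq in HN by (apply pow_le; lra).
  assert (Htail : beta ^ S N / (1 - beta) < eps / 4).
  { apply Rlt_div_l; lra. }
  destruct (limit1_in_sum_f_R0 (fun n y => beta ^ n * g n y) (fun n => beta ^ n * e n) D x N
              (fun n => limit_mul _ (g n) D _ _ x (limit_free (fun _ => beta ^ n) D 0 x) (Hlim n))
              (eps / 2) ltac:(lra)) as [alp [Halp Hclose]].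
  exists alp. split; [exact Halp|].
  intros y [Dy Hy]. specialize (Hclose y (conj Dy Hy)). simpl in Hclose |- *. unfold R_dist in *.
  pose proof (Rabs_Series_pow_mul_tail_le beta Hbeta (fun n => g n y) (S N) (fun n => Hg n y Dy))
    as Hgtail.
  pose proof (Rabs_Series_pow_mul_tail_le beta Hbeta e (S N) He) as Hetail.
  rewrite (Series_incr_n _ (S N) ltac:(lia) (ex_series_pow_mul_bounded beta Hbeta _ (fun n => Hg n y Dy))).
  rewrite (Series_incr_n _ (S N) ltac:(lia) (ex_series_pow_mul_bounded beta Hbeta _ He)).
  cbv beta in *. simpl pred.
  apply Rabs_def2 in Hclose. apply Rabs_le_between in Hgtail, Hetail. apply Rabs_def1; lra.
Qed.

Lemma geom_partial_sum_bounds (beta : R) (m : nat) : 0 < beta < 1 ->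
  0 <= (1 - beta ^ m) / (1 - beta) <= / (1 - beta).
Proof.
  intros Hbeta. pose proof (pow_unit_interval beta m ltac:(lra)).
  assert (0 < / (1 - beta)) by (apply Rinv_0_lt_compat; lra).
  unfold Rdiv. split; nra.
Qed.

Section Lambda.
Variables a b beta : R.
Hypotheses (a_ge0 : 0 <= a) (b_ge0 : 0 <= b) (beta_01 : 0 < beta < 1).

Lemma length_prefix u n : length (prefix u n) = n.
Proof. unfold prefix. now rewrite length_map, length_seq. Qed.

Lemma ex_series_S_inf u y : 0 <= y ->
  ex_series (fun n => beta ^ n * phi_word a b (prefix u n) y).
Proof.
  intros Hy. apply (ex_series_pow_mul_linear_growth beta beta_01 y); [exact Hy|].
  intros n. pose proof (phi_word_le a b a_ge0 b_ge0 (prefix u n) y Hy) as Hle.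
  rewrite length_prefix in Hle. split; [now apply phi_word_nonneg | exact Hle].
Qed.

Lemma S_inf_Series u y : 0 <= y ->
  S_inf a b beta u y = Series (fun n => beta ^ n * phi_word a b (prefix u n) y).
Proof. intros Hy. apply Rlim_sum_f_R0, ex_series_S_inf, Hy. Qed.

Definition S_deriv (u : nat -> bool) (x : R) : R :=
  Series (fun n => beta ^ n * phi_word_deriv a b (prefix u n) x).

Lemma S_inf_derive u x : 0 <= x ->
  limit1_in (fun y => (S_inf a b beta u y - S_inf a b beta u x) / (y - x))
            (fun y => y <> x /\ 0 <= y) (S_deriv u x) x.
Proof.
  intros Hx.
  set (q n y := (phi_word a b (prefix u n) y - phi_word a b (prefix u n) x) / (y - x)).
  apply (limit1_in_ext _ (fun y => Series (fun n => beta ^ n * q n y))).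
  - intros y [Hne Hy].
    rewrite !S_inf_Series by assumption.
    rewrite <- Series_minus by now apply ex_series_S_inf.
    rewrite (Series_ext (fun n => beta ^ n * q n y)
               (fun n => / (y - x) * (beta ^ n * phi_word a b (prefix u n) y
                                      - beta ^ n * phi_word a b (prefix u n) x)))
      by (intros n; unfold q; field; lra).
    rewrite Series_scal_l. field. lra.
  - apply limit1_in_Series_pow_mul; [exact beta_01 | | |].
    + intros n y [Hne Hy]. apply Rabs_le. unfold q.
      pose proof (phi_word_diff_quot_bounds a b a_ge0 b_ge0 (prefix u n) x y Hx Hy Hne). lra.
    + intros n. apply Rabs_le.
      pose proof (phi_word_deriv_bounds a b a_ge0 b_ge0 (prefix u n) x Hx). lra.
    + intros n. apply limit1_in_diff_quot, phi_word_derive; assumption.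
Qed.

Lemma Rabs_S_deriv_sub_le u v x : 0 <= x -> Rabs (S_deriv u x - S_deriv v x) <= / (1 - beta).
Proof.
  intros Hx.
  assert (Hd : forall u' n, Rabs (phi_word_deriv a b (prefix u' n) x) <= 1).
  { intros u' n. apply Rabs_le.
    pose proof (phi_word_deriv_bounds a b a_ge0 b_ge0 (prefix u' n) x Hx). lra. }
  unfold S_deriv. rewrite <- Series_minus by (apply ex_series_pow_mul_bounded; auto).
  rewrite (Series_ext _ (fun n => beta ^ n * (phi_word_deriv a b (prefix u n) x
                                            - phi_word_deriv a b (prefix v n) x)))
    by (intros n; ring).
  apply Rabs_Series_pow_mul_le; [exact beta_01|]. intros n. apply Rabs_le.
  pose proof (phi_word_deriv_bounds a b a_ge0 b_ge0 (prefix u n) x Hx).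
  pose proof (phi_word_deriv_bounds a b a_ge0 b_ge0 (prefix v n) x Hx). lra.
Qed.

End Lambda.

Theorem mainTheorem14 (a b beta : R) (w : list bool) :
  0 <= a -> a < b -> 0 < beta < 1 ->
  valid ([false] ++ w ++ [true]) ->
  forall x : R, 0 <= x ->
  exists l : R,
    limit1_in (fun y => (lambda a b beta w y - lambda a b beta w x) / (y - x))
              (fun y => y <> x /\ 0 <= y) l x
    /\ Rabs l <= 1 / (1 - beta) ^ 2.
Proof.
  intros Ha Hab Hbeta _ x Hx.
  assert (Hb : 0 <= b) by lra.
  set (U := omega ([false; true] ++ w)). set (V := omega ([true; false] ++ w)).
  set (C := (1 - beta ^ (length w + 2)) / (1 - beta)).
  exists (C * (S_deriv a b beta U x - S_deriv a b beta V x)). split.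
  - apply (limit1_in_ext _ (fun y => C * ((S_inf a b beta U y - S_inf a b beta U x) / (y - x)
                                         - (S_inf a b beta V y - S_inf a b beta V x) / (y - x)))).
    + intros y [Hne _]. unfold lambda. fold U V C. field. lra.
    + apply (limit_mul (fun _ => C)); [exact (limit_free (fun _ => C) _ 0 x) |].
      apply limit_minus; apply S_inf_derive; assumption.
  - pose proof (geom_partial_sum_bounds beta (length w + 2) Hbeta) as HC. fold C in HC.
    pose proof (Rabs_S_deriv_sub_le a b beta Ha Hb Hbeta U V x Hx).
    rewrite Rabs_mult, (Rabs_pos_eq C) by lra.
    replace (1 / (1 - beta) ^ 2) with (/ (1 - beta) * / (1 - beta)) by (field; lra).
    apply Rmult_le_compat; try lra. apply Rabs_pos.
Qed.
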